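(* Let $(X,d)$ be a complete metric space, let $k\in[0,1)$, let $S:X\to X$ be a mapping, and let $T:X\to X$ be continuous, one-to-one and subsequentially convergent. Let $\phi:[0,+\infty)\to[0,+\infty)$ be a nonnegative Lebesgue-integrable function, summable on each compact subset of $[0,+\infty)$, such that $\int_0^{\epsilon}\phi(t)\,dt>0$ for each $\epsilon>0$. Suppose that for all $x,y\in X$, \[\int_0^{d(TSx,TSy)}\phi(t)\,dt\le k\int_0^{m'(Tx,Ty)}\phi(t)\,dt,\] where \[m'(Tx,Ty)=\max\Big\{d(Tx,Ty),\,d(Tx,TSx),\,d(Ty,TSy),\,\tfrac{d(Tx,TSy)+d(Ty,TSx)}{2}\Big\}.\] Then $S$ has a unique fixed point $b\in X$. Moreover, if $T$ is sequentially convergent, then for each $x\in X$, $\lim_{n\to\infty}S^nx=b$.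
   Context: A mapping $T:X\to X$ on a metric space $(X,d)$ is called sequentially convergent if for every sequence $\{y_n\}$ in $X$, convergence of $\{Ty_n\}$ implies convergence of $\{y_n\}$. It is called subsequentially convergent if for every sequence $\{y_n\}$ in $X$, convergence of $\{Ty_n\}$ implies that $\{y_n\}$ has a convergent subsequence. *)

From Stdlib Require Import Reals Lra ClassicalEpsilon.
Open Scope R_scope.

Definition is_metric {X : Type} (d : X -> X -> R) : Prop :=
  (forall x y, 0 <= d x y) /\
  (forall x y, d x y = 0 <-> x = y) /\
  (forall x y, d x y = d y x) /\
  (forall x y z, d x z <= d x y + d y z).

Definition converges_to {X : Type} (d : X -> X -> R) (u : nat -> X) (l : X) : Prop :=
  forall eps, eps > 0 -> exists N : nat, forall n, (n >= N)%nat -> d (u n) l < eps.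

Definition convergent {X : Type} (d : X -> X -> R) (u : nat -> X) : Prop :=
  exists l, converges_to d u l.

Definition cauchy {X : Type} (d : X -> X -> R) (u : nat -> X) : Prop :=
  forall eps, eps > 0 -> exists N : nat,
    forall m n, (m >= N)%nat -> (n >= N)%nat -> d (u m) (u n) < eps.

Definition complete {X : Type} (d : X -> X -> R) : Prop :=
  forall u : nat -> X, cauchy d u -> convergent d u.

Definition continuous_map {X : Type} (d : X -> X -> R) (T : X -> X) : Prop :=
  forall x eps, eps > 0 -> exists delta, delta > 0 /\
    forall y, d x y < delta -> d (T x) (T y) < eps.

Definition one_to_one {X : Type} (T : X -> X) : Prop :=
  forall x y, T x = T y -> x = y.

Definition sequentially_convergent {X : Type} (d : X -> X -> R) (T : X -> X) : Prop :=
  forall y : nat -> X, convergent d (fun n => T (y n)) -> convergent d y.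

Definition subsequentially_convergent {X : Type} (d : X -> X -> R) (T : X -> X) : Prop :=
  forall y : nat -> X, convergent d (fun n => T (y n)) ->
    exists sigma : nat -> nat, (forall n, (sigma n < sigma (S n))%nat) /\
      convergent d (fun n => y (sigma n)).

(* ---------- Lebesgue integral on a compact interval ----------
   Realised as the McShane (gauge) integral, which on a compact interval
   coincides exactly with the Lebesgue integral (same integrable functions,
   same values). *)

Definition mcshane_fine (delta : R -> R) (a b : R) (n : nat) (x t : nat -> R) : Prop :=
  x 0%nat = a /\ x n = b /\
  (forall i, (i < n)%nat ->
     x i <= x (S i) /\ a <= t i <= b /\
     t i - delta (t i) < x i /\ x (S i) < t i + delta (t i)).

Fixpoint riemann_sum (f : R -> R) (x t : nat -> R) (n : nat) : R :=
  match n with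
  | O => 0
  | S m => riemann_sum f x t m + f (t m) * (x (S m) - x m)
  end.

Definition has_integral (f : R -> R) (a b I : R) : Prop :=
  forall eps, eps > 0 -> exists delta : R -> R, (forall s, delta s > 0) /\
    forall n x t, mcshane_fine delta a b n x t -> Rabs (riemann_sum f x t n - I) < eps.

Definition integrable_on (f : R -> R) (a b : R) : Prop := exists I, has_integral f a b I.

(* The value of the integral over [a,b] (meaningful when integrable). *)
Definition integral (f : R -> R) (a b : R) : R :=
  epsilon (inhabits 0) (fun I => has_integral f a b I).

Definition mprime {X : Type} (d : X -> X -> R) (S T : X -> X) (x y : X) : R :=
  Rmax (Rmax (d (T x) (T y)) (d (T x) (T (S x))))
       (Rmax (d (T y) (T (S y))) ((d (T x) (T (S y)) + d (T y) (T (S x))) / 2)).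

From Stdlib Require Import Reals Lra Lia ClassicalEpsilon Classical.
Open Scope R_scope.

(* The primitive F s = integral of phi over [0,s] is nonnegative, nondecreasing and continuous,
   and F e > 0 for e > 0; nothing else about phi is used.  Along an orbit x_n = S^n x0 the
   distances a_n = d(T x_n, T x_(n+1)) satisfy F a_(n+1) <= k F a_n, so a_n -> 0; continuity
   of F at a positive level c rules out F u <= k F v with u, v both near c, which makes
   (T x_n) Cauchy.  By completeness T x_n -> z, a subsequence x_(sigma n) -> b with z = T b,
   and the same gap argument applied to b and x_n forces S b = b.  Uniqueness follows from
   injectivity of T; when T is sequentially convergent each orbit converges to some fixed
   point, which must be b. *)

(* [mcshane_fine delta a b] is [fine_division delta a b a b]; concatenated divisions need
   tags in a larger interval [lo,hi]. *)
Definition fine_division (delta : R -> R) (a b lo hi : R) (n : nat) (x t : nat -> R) : Prop :=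
  x 0%nat = a /\ x n = b /\
  (forall i, (i < n)%nat ->
     x i <= x (S i) /\ lo <= t i <= hi /\
     t i - delta (t i) < x i /\ x (S i) < t i + delta (t i)).

Lemma fine_division_weaken delta delta' a b lo hi lo' hi' n x t :
  fine_division delta a b lo hi n x t ->
  (forall s, lo <= s <= hi -> delta s <= delta' s) -> lo' <= lo -> hi <= hi' ->
  fine_division delta' a b lo' hi' n x t.
Proof.
  intros [Hx0 [Hxn Hx]] Hdelta Hlo Hhi.
  split; [exact Hx0 | split; [exact Hxn |]].
  intros i Hi. destruct (Hx i Hi) as [Hmono [Htag [Hleft Hright]]].
  specialize (Hdelta (t i) Htag). repeat split; lra.
Qed.

Lemma fine_division_widen delta a b lo hi lo' hi' n x t :
  fine_division delta a b lo hi n x t -> lo' <= lo -> hi <= hi' ->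
  fine_division delta a b lo' hi' n x t.
Proof. intros Hfine Hlo Hhi. apply (fine_division_weaken delta) with lo hi; auto; intros; lra. Qed.

Definition concat_points (n : nat) (x y : nat -> R) (i : nat) : R :=
  if (i <=? n)%nat then x i else y (i - n)%nat.

Definition concat_tags (n : nat) (t s : nat -> R) (i : nat) : R :=
  if (i <? n)%nat then t i else s (i - n)%nat.

Lemma concat_points_l n x y i : (i <= n)%nat -> concat_points n x y i = x i.
Proof. intros Hi. unfold concat_points. destruct (Nat.leb_spec i n); [reflexivity | lia]. Qed.

Lemma concat_points_r n x y i :
  x n = y 0%nat -> (n <= i)%nat -> concat_points n x y i = y (i - n)%nat.
Proof.
  intros Hjoin Hi. unfold concat_points. destruct (Nat.leb_spec i n); [| reflexivity].
  replace i with n by lia. rewrite Nat.sub_diag. exact Hjoin.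
Qed.

Lemma concat_tags_l n t s i : (i < n)%nat -> concat_tags n t s i = t i.
Proof. intros Hi. unfold concat_tags. destruct (Nat.ltb_spec i n); [reflexivity | lia]. Qed.

Lemma concat_tags_r n t s i : (n <= i)%nat -> concat_tags n t s i = s (i - n)%nat.
Proof. intros Hi. unfold concat_tags. destruct (Nat.ltb_spec i n); [lia | reflexivity]. Qed.

Lemma fine_division_concat delta a b c lo hi n m x t y s :
  fine_division delta a b lo hi n x t -> fine_division delta b c lo hi m y s ->
  fine_division delta a c lo hi (n + m) (concat_points n x y) (concat_tags n t s).
Proof.
  intros [Hx0 [Hxn Hx]] [Hy0 [Hym Hy]].
  assert (Hjoin : x n = y 0%nat) by congruence.
  split; [| split].
  - rewrite concat_points_l by lia. exact Hx0.
  - rewrite concat_points_r by (auto; lia). replace (n + m - n)%nat with m by lia. exact Hym.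
  - intros i Hi. destruct (Nat.lt_ge_cases i n) as [Hlt | Hge].
    + rewrite !concat_points_l, concat_tags_l by lia. apply Hx; lia.
    + rewrite !concat_points_r, concat_tags_r by (auto; lia).
      replace (S i - n)%nat with (S (i - n)) by lia. apply Hy; lia.
Qed.

Lemma riemann_sum_ext f x t x' t' n :
  (forall i, (i <= n)%nat -> x i = x' i) -> (forall i, (i < n)%nat -> t i = t' i) ->
  riemann_sum f x t n = riemann_sum f x' t' n.
Proof.
  induction n as [| n IH]; intros Hx Ht; simpl; [reflexivity |].
  rewrite IH by auto. rewrite Hx, (Hx n), Ht by lia. reflexivity.
Qed.

Lemma riemann_sum_concat f n m x t y s :
  x n = y 0%nat ->
  riemann_sum f (concat_points n x y) (concat_tags n t s) (n + m) =
  riemann_sum f x t n + riemann_sum f y s m.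
Proof.
  intros Hjoin. induction m as [| m IH].
  - rewrite Nat.add_0_r. simpl. rewrite Rplus_0_r.
    apply riemann_sum_ext; intros.
    + apply concat_points_l; lia.
    + apply concat_tags_l; lia.
  - replace (n + S m)%nat with (S (n + m)) by lia. simpl. rewrite IH.
    rewrite concat_tags_r, !concat_points_r by (auto; lia).
    replace (n + m - n)%nat with m by lia.
    replace (S (n + m) - n)%nat with (S m) by lia. ring.
Qed.

Definition single_points (p q : R) (i : nat) : R := if (i =? 0)%nat then p else q.

Lemma fine_division_single delta p q c lo hi :
  p <= q -> lo <= c <= hi -> c - delta c < p -> q < c + delta c ->
  fine_division delta p q lo hi 1 (single_points p q) (fun _ => c).
Proof.
  intros. split; [reflexivity | split; [reflexivity |]].
  intros i Hi. replace i with 0%nat by lia. unfold single_points; simpl. lra.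
Qed.

Lemma riemann_sum_single f p q c :
  riemann_sum f (single_points p q) (fun _ => c) 1 = f c * (q - p).
Proof. unfold single_points; simpl. ring. Qed.

Lemma riemann_sum_nonneg f delta a b lo n x t :
  (forall s, lo <= s -> 0 <= f s) -> fine_division delta a b lo b n x t ->
  0 <= riemann_sum f x t n.
Proof.
  intros Hf [_ [_ Hx]]. induction n as [| n IH]; simpl; [lra |].
  assert (0 <= riemann_sum f x t n) by (apply IH; intros; apply Hx; lia).
  destruct (Hx n ltac:(lia)) as [Hmono [Htag _]].
  assert (0 <= f (t n)) by (apply Hf; lra). nra.
Qed.

(* Cousin's lemma, by the supremum of the endpoints s up to which [a,s] has a fine division. *)
Lemma cousin delta a b :
  (forall s, delta s > 0) -> a <= b -> exists n x t, fine_division delta a b a b n x t.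
Proof.
  intros Hdelta Hab.
  set (E := fun s => a <= s <= b /\ exists n x t, fine_division delta a s a s n x t).
  assert (Ea : E a).
  { split; [lra |]. exists 0%nat, (fun _ => a), (fun _ => a).
    split; [reflexivity | split; [reflexivity | intros; lia]]. }
  assert (Ebound : bound E) by (exists b; intros s [Hs _]; lra).
  destruct (completeness E Ebound (ex_intro _ a Ea)) as [sup [Hub Hlub]].
  assert (Hsup_a : a <= sup) by (apply Hub; exact Ea).
  assert (Hsup_b : sup <= b) by (apply Hlub; intros s [Hs _]; lra).
  assert (Hds := Hdelta sup).
  assert (Hclose : exists s, E s /\ s > sup - delta sup).
  { apply NNPP. intros Hno.
    assert (sup <= sup - delta sup); [| lra].
    apply Hlub. intros s Es. apply Rnot_lt_le. intros Hs. apply Hno. exists s. split; auto. }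
  destruct Hclose as [s [[Hs [n [x [t Hfine]]]] Hs_close]].
  assert (Hs_sup : s <= sup) by (apply Hub; split; auto; exists n, x, t; auto).
  set (s' := Rmin b (sup + delta sup / 2)).
  assert (Hs'_b : s' <= b) by apply Rmin_l.
  assert (Hs'_sup : s' <= sup + delta sup / 2) by apply Rmin_r.
  assert (Hsup_s' : sup <= s') by (apply Rmin_glb; lra).
  assert (Es' : E s').
  { split; [lra |]. exists (n + 1)%nat, (concat_points n x (single_points s s')),
      (concat_tags n t (fun _ => sup)).
    apply fine_division_concat with (b := s).
    - apply fine_division_weaken with delta a s; auto; intros; lra.
    - apply fine_division_single; lra. }
  assert (Hs'_le : s' <= sup) by (apply Hub; exact Es').
  assert (Hs'_eq : s' = b).
  { destruct (Rle_lt_dec b sup); [lra |].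
    assert (sup < s') by (apply Rmin_glb_lt; lra). lra. }
  destruct Es' as [_ Hfine']. rewrite Hs'_eq in Hfine'. exact Hfine'.
Qed.

(* The gauge is the one for [a,b], independent of p: this makes the estimates below
   uniform in p. *)
Lemma has_integral_increment f a p b Ip Ib delta eps :
  a <= p <= b -> has_integral f a p Ip -> (forall s, delta s > 0) ->
  (forall n x t, mcshane_fine delta a b n x t -> Rabs (riemann_sum f x t n - Ib) < eps) ->
  forall n x t, fine_division delta p b a b n x t ->
  - eps <= Ib - Ip - riemann_sum f x t n <= eps.
Proof.
  intros Hapb HIp Hdelta HIb n x t Hfine.
  enough (Habs : Rabs (Ib - Ip - riemann_sum f x t n) <= eps)
    by (revert Habs; unfold Rabs; destruct Rcase_abs; lra).
  apply Rnot_lt_le. intros Hgt.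
  set (eps' := Rabs (Ib - Ip - riemann_sum f x t n) - eps).
  destruct (HIp eps' ltac:(unfold eps'; lra)) as [deltap [Hdeltap HIp']].
  set (delta' := fun s => Rmin (delta s) (deltap s)).
  assert (Hdelta' : forall s, delta' s > 0) by (intros; apply Rmin_glb_lt; [apply Hdelta | apply Hdeltap]).
  destruct (cousin delta' a p Hdelta' ltac:(lra)) as [m [y [s Hfine']]].
  assert (Happrox_p : Rabs (riemann_sum f y s m - Ip) < eps').
  { apply HIp'. apply fine_division_weaken with delta' a p; [exact Hfine' | intros; apply Rmin_r | lra | lra]. }
  assert (Hfine_ap : fine_division delta a p a b m y s).
  { apply fine_division_weaken with delta' a p; [exact Hfine' | intros; apply Rmin_l | lra | lra]. }
  assert (Hfine_ab := fine_division_concat _ _ _ _ _ _ _ _ _ _ _ _ Hfine_ap Hfine).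
  assert (Happrox_b := HIb _ _ _ Hfine_ab).
  rewrite riemann_sum_concat in Happrox_b
    by (destruct Hfine' as [_ [Hend _]]; destruct Hfine as [Hstart _]; congruence).
  unfold eps' in *.
  revert Happrox_p Happrox_b.
  unfold Rabs; repeat destruct Rcase_abs; lra.
Qed.

Section PrimitiveOfNonnegative.

Variable phi : R -> R.
Hypothesis phi_nonneg : forall t, 0 <= t -> 0 <= phi t.
Hypothesis phi_integrable : forall a, 0 <= a -> integrable_on phi 0 a.

Lemma has_integral_integral p : 0 <= p -> has_integral phi 0 p (integral phi 0 p).
Proof.
  intros Hp. destruct (phi_integrable p Hp) as [I HI].
  unfold integral. apply epsilon_spec. exists I. exact HI.
Qed.

Lemma integral_nonneg p : 0 <= p -> 0 <= integral phi 0 p.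
Proof.
  intros Hp. apply Rnot_lt_le. intros Hneg.
  destruct (has_integral_integral p Hp (- integral phi 0 p) ltac:(lra))
    as [delta [Hdelta Happrox]].
  destruct (cousin delta 0 p Hdelta Hp) as [n [x [t Hfine]]].
  specialize (Happrox n x t Hfine).
  pose proof (riemann_sum_nonneg phi _ _ _ _ _ _ _ phi_nonneg Hfine).
  apply Rabs_def2 in Happrox. lra.
Qed.

Lemma integral_mono p q : 0 <= p <= q -> integral phi 0 p <= integral phi 0 q.
Proof.
  intros Hpq. apply Rnot_lt_le. intros Hlt.
  set (eps := (integral phi 0 p - integral phi 0 q) / 2).
  destruct (has_integral_integral q ltac:(lra) eps ltac:(unfold eps; lra))
    as [delta [Hdelta Happrox]].
  destruct (cousin delta p q Hdelta ltac:(lra)) as [n [x [t Hfine]]].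
  assert (0 <= riemann_sum phi x t n).
  { apply (riemann_sum_nonneg phi delta p q p n x t); [intros; apply phi_nonneg; lra | exact Hfine]. }
  assert (Hinc := has_integral_increment phi 0 p q _ _ _ _ ltac:(lra)
    (has_integral_integral p ltac:(lra)) Hdelta Happrox n x t
    (fine_division_widen _ _ _ _ _ 0 q _ _ _ Hfine ltac:(lra) ltac:(lra))).
  unfold eps in *. lra.
Qed.

(* A division of [p,b] may start with the single interval [p,q] tagged at c: the increment
   over [p,q] is then [phi c * (q - p)] up to the error of the gauge for [0,b]. *)
Lemma integral_continuous c eps :
  0 <= c -> eps > 0 -> exists h, h > 0 /\
    forall p q, 0 <= p <= c -> c <= q -> q - p < h ->
      integral phi 0 q - integral phi 0 p < eps.
Proof.
  intros Hc Heps. set (b := c + 1).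
  destruct (has_integral_integral b ltac:(unfold b; lra) (eps / 4) ltac:(lra))
    as [delta [Hdelta Happrox]].
  set (A := Rabs (phi c)).
  assert (HA : 0 <= A) by apply Rabs_pos.
  set (h := Rmin (Rmin (delta c) 1) (eps / 2 / (A + 1))).
  assert (Hh_delta : h <= delta c) by (unfold h; eapply Rle_trans; [apply Rmin_l | apply Rmin_l]).
  assert (Hh_1 : h <= 1) by (unfold h; eapply Rle_trans; [apply Rmin_l | apply Rmin_r]).
  assert (Hh_A : h <= eps / 2 / (A + 1)) by (unfold h; apply Rmin_r).
  exists h. split.
  { unfold h. apply Rmin_glb_lt; [apply Rmin_glb_lt; [apply Hdelta | lra] |].
    apply Rdiv_lt_0_compat; lra. }
  intros p q Hp Hq Hpq.
  destruct (cousin delta q b Hdelta ltac:(unfold b; lra)) as [n [x [t Hfine]]].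
  assert (Hfine_q := fine_division_widen _ _ _ _ _ 0 b _ _ _ Hfine
    ltac:(lra) ltac:(lra)).
  assert (Hfine_p := fine_division_concat _ _ _ _ _ _ _ _ _ _ _ _
    (fine_division_single delta p q c 0 b ltac:(lra) ltac:(unfold b; lra) ltac:(lra) ltac:(lra))
    Hfine_q).
  assert (Hinc_q := has_integral_increment phi 0 q b _ _ _ _ ltac:(unfold b; lra)
    (has_integral_integral q ltac:(lra)) Hdelta Happrox n x t Hfine_q).
  assert (Hinc_p := has_integral_increment phi 0 p b _ _ _ _ ltac:(unfold b; lra)
    (has_integral_integral p ltac:(lra)) Hdelta Happrox _ _ _ Hfine_p).
  rewrite riemann_sum_concat, riemann_sum_single in Hinc_p
    by (destruct Hfine as [Hstart _]; unfold single_points; simpl; congruence).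
  assert (Hsmall : phi c * (q - p) < eps / 2).
  { assert (phi c * (q - p) <= A * (q - p)) by (apply Rmult_le_compat_r; [lra | apply Rle_abs]).
    assert ((A + 1) * (q - p) < (A + 1) * (eps / 2 / (A + 1))) by (apply Rmult_lt_compat_l; lra).
    assert ((A + 1) * (eps / 2 / (A + 1)) = eps / 2) by (field; lra).
    nra. }
  lra.
Qed.

End PrimitiveOfNonnegative.

Section MetricLimits.

Variables (X : Type) (d : X -> X -> R).
Hypothesis Hd : is_metric d.

Lemma converges_to_unique u l1 l2 : converges_to d u l1 -> converges_to d u l2 -> l1 = l2.
Proof.
  destruct Hd as [d_nonneg [d_eq0 [d_sym d_tri]]]. intros H1 H2.
  apply d_eq0. apply Rle_antisym; [apply Rnot_lt_le; intros Hpos | apply d_nonneg].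
  destruct (H1 (d l1 l2 / 2) ltac:(lra)) as [N1 HN1].
  destruct (H2 (d l1 l2 / 2) ltac:(lra)) as [N2 HN2].
  specialize (HN1 (N1 + N2)%nat ltac:(lia)). specialize (HN2 (N1 + N2)%nat ltac:(lia)).
  pose proof (d_tri l1 (u (N1 + N2)%nat) l2). rewrite d_sym in HN1. lra.
Qed.

Lemma converges_to_subseq u l (sigma : nat -> nat) :
  (forall n, (sigma n < sigma (S n))%nat) -> converges_to d u l ->
  converges_to d (fun n => u (sigma n)) l.
Proof.
  intros Hsigma Hu eps Heps. destruct (Hu eps Heps) as [N HN].
  assert (Hgrow : forall n, (n <= sigma n)%nat).
  { induction n as [| n IH]; [lia |]. specialize (Hsigma n). lia. }
  exists N. intros n Hn. apply HN. specialize (Hgrow n). lia.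
Qed.

Lemma converges_to_continuous T u l :
  continuous_map d T -> converges_to d u l -> converges_to d (fun n => T (u n)) (T l).
Proof.
  destruct Hd as [_ [_ [d_sym _]]]. intros HT Hu eps Heps.
  destruct (HT l eps Heps) as [delta [Hdelta Hcont]].
  destruct (Hu delta Hdelta) as [N HN]. exists N. intros n Hn.
  rewrite d_sym. apply Hcont. rewrite d_sym. apply HN; exact Hn.
Qed.

End MetricLimits.

Lemma mprime_le {X : Type} (d : X -> X -> R) f T (x y : X) r :
  d (T x) (T y) <= r -> d (T x) (T (f x)) <= r -> d (T y) (T (f y)) <= r ->
  (d (T x) (T (f y)) + d (T y) (T (f x))) / 2 <= r -> mprime d f T x y <= r.
Proof. intros; unfold mprime; repeat apply Rmax_lub; assumption. Qed.

Lemma mprime_lt {X : Type} (d : X -> X -> R) f T (x y : X) r :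
  d (T x) (T y) < r -> d (T x) (T (f x)) < r -> d (T y) (T (f y)) < r ->
  (d (T x) (T (f y)) + d (T y) (T (f x))) / 2 < r -> mprime d f T x y < r.
Proof. intros; unfold mprime; repeat apply Rmax_lub_lt; assumption. Qed.

Lemma mprime_ge_displacement {X : Type} (d : X -> X -> R) f T (x y : X) :
  d (T x) (T (f x)) <= mprime d f T x y.
Proof. unfold mprime. eapply Rle_trans; [apply Rmax_r | apply Rmax_l]. Qed.

Lemma mprime_nonneg {X : Type} (d : X -> X -> R) f T (x y : X) :
  is_metric d -> 0 <= mprime d f T x y.
Proof. intros Hd. eapply Rle_trans; [apply Hd | apply mprime_ge_displacement]. Qed.

Section ContractiveCondition.

Variable F : R -> R.
Hypothesis F_mono : forall p q, 0 <= p <= q -> F p <= F q.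
Hypothesis F_nonneg : forall p, 0 <= p -> 0 <= F p.
Hypothesis F_pos : forall e, e > 0 -> F e > 0.
Hypothesis F_continuous : forall c eps, 0 <= c -> eps > 0 -> exists h, h > 0 /\
  forall p q, 0 <= p <= c -> c <= q -> q - p < h -> F q - F p < eps.
Variable k : R.
Hypothesis Hk : 0 <= k < 1.

Lemma F_contraction_zero u v : 0 <= v <= u -> F u <= k * F v -> u = 0.
Proof.
  intros Hvu Hcontr. apply Rle_antisym; [apply Rnot_lt_le; intros Hu | lra].
  pose proof (F_pos u Hu). pose proof (F_mono v u Hvu). pose proof (F_nonneg v (proj1 Hvu)).
  nra.
Qed.

(* By continuity of F at c, u and v near c would give F c <= k F c up to an arbitrarily
   small error. *)
Lemma F_contraction_gap c : c > 0 -> exists h, 0 < h <= c /\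
  forall u v, 0 <= u -> 0 <= v -> F u <= k * F v -> c - h < u -> v < c + h -> False.
Proof.
  intros Hc. pose proof (F_pos c Hc) as HFc.
  destruct (F_continuous c ((1 - k) * F c / 2) ltac:(lra) ltac:(nra)) as [h0 [Hh0 Hcont]].
  set (h := Rmin (h0 / 3) c).
  assert (Hh_h0 : h <= h0 / 3) by apply Rmin_l.
  assert (Hh_c : h <= c) by apply Rmin_r.
  assert (Hh : 0 < h) by (apply Rmin_glb_lt; lra).
  exists h. split; [lra |]. intros u v Hu Hv Hcontr Hu_near Hv_near.
  set (p := c - h). set (q := c + h). set (w := F q - F p).
  assert (Hw : w < (1 - k) * F c / 2) by (apply Hcont; unfold p, q; lra).
  pose proof (F_mono p u ltac:(unfold p; lra)).
  pose proof (F_mono v q ltac:(unfold q; lra)).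
  pose proof (F_mono c q ltac:(unfold q; lra)).
  pose proof (F_nonneg v Hv).
  assert (k * F v <= k * F q) by (apply Rmult_le_compat_l; lra).
  (* F p <= k F q = k (F p + w) and F c <= F p + w give (1 - k) F c <= (2 - k) w. *)
  assert ((1 - k) * F c <= (2 - k) * w) by (unfold w in *; nra).
  assert ((2 - k) * w < (2 - k) * ((1 - k) * F c / 2)) by (apply Rmult_lt_compat_l; lra).
  assert (0 <= k * ((1 - k) * F c)) by (apply Rmult_le_pos; [| apply Rmult_le_pos]; lra).
  lra.
Qed.


Variables (X : Type) (d : X -> X -> R).
Hypothesis Hd : is_metric d.
Variables f T : X -> X.
Hypothesis Hcontr : forall x y, F (d (T (f x)) (T (f y))) <= k * F (mprime d f T x y).

Hypothesis HT_inj : one_to_one T.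

Let d_nonneg : forall x y, 0 <= d x y := proj1 Hd.
Let d_eq0 : forall x y, d x y = 0 <-> x = y := proj1 (proj2 Hd).
Let d_sym : forall x y, d x y = d y x := proj1 (proj2 (proj2 Hd)).
Let d_tri : forall x y z, d x z <= d x y + d y z := proj2 (proj2 (proj2 Hd)).
Let d_refl x : d x x = 0 := proj2 (d_eq0 x x) eq_refl.

Definition step_dist (x0 : X) (n : nat) : R :=
  d (T (Nat.iter n f x0)) (T (Nat.iter (S n) f x0)).

Lemma step_dist_contraction x0 n :
  step_dist x0 (S n) <= step_dist x0 n /\ F (step_dist x0 (S n)) <= k * F (step_dist x0 n).
Proof.
  unfold step_dist. set (y := Nat.iter n f x0).
  change (Nat.iter (S n) f x0) with (f y). change (Nat.iter (S (S n)) f x0) with (f (f y)).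
  set (a0 := d (T y) (T (f y))). set (a1 := d (T (f y)) (T (f (f y)))).
  assert (Hm : mprime d f T y (f y) <= Rmax a0 a1).
  { pose proof (Rmax_l a0 a1). pose proof (Rmax_r a0 a1).
    assert (d (T y) (T (f (f y))) <= a0 + a1) by apply d_tri.
    apply mprime_le; fold a0 a1; rewrite ?d_refl; lra. }
  pose proof (mprime_nonneg d f T y (f y) Hd) as Hm0.
  pose proof (Hcontr y (f y)) as Hc. fold a1 in Hc.
  destruct (Rle_lt_dec a1 a0) as [Hle | Hlt].
  - rewrite Rmax_left in Hm by exact Hle. split; [exact Hle |].
    pose proof (F_mono _ _ (conj Hm0 Hm)).
    assert (k * F (mprime d f T y (f y)) <= k * F a0) by (apply Rmult_le_compat_l; lra).
    lra.
  - rewrite Rmax_right in Hm by lra.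
    pose proof (F_contraction_zero _ _ (conj Hm0 Hm) Hc).
    assert (0 <= a0) by apply d_nonneg. lra.
Qed.

Lemma step_dist_vanishes x0 e : e > 0 -> exists N, forall n, (n >= N)%nat -> step_dist x0 n < e.
Proof.
  intros He.
  set (a := step_dist x0). set (C := F (a 0%nat)).
  assert (Hdecay : forall n, F (a n) <= k ^ n * C).
  { induction n as [| n IH]; simpl; [unfold C; lra |].
    destruct (step_dist_contraction x0 n) as [_ Hstep].
    assert (k * F (a n) <= k * (k ^ n * C)) by (apply Rmult_le_compat_l; lra).
    fold a in Hstep. lra. }
  pose proof (F_pos e He) as HFe. assert (HC : 0 <= C) by (apply F_nonneg, d_nonneg).
  destruct (pow_lt_1_zero k ltac:(rewrite Rabs_right; lra) (F e / (C + 1))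
              ltac:(apply Rdiv_lt_0_compat; lra)) as [N HN].
  exists N. intros n Hn. apply Rnot_le_lt. intros Hge.
  specialize (HN n Hn). rewrite Rabs_right in HN by (apply Rle_ge, pow_le; lra).
  pose proof (pow_le k n (proj1 Hk)).
  assert (k ^ n * (C + 1) < F e / (C + 1) * (C + 1)) by (apply Rmult_lt_compat_r; lra).
  assert (F e / (C + 1) * (C + 1) = F e) by (field; lra).
  pose proof (F_mono e (a n) ltac:(lra)). specialize (Hdecay n). nra.
Qed.

Lemma orbit_cauchy x0 : cauchy d (fun n => T (Nat.iter n f x0)).
Proof.
  intros eps Heps. set (x := fun n => T (Nat.iter n f x0)).
  destruct (F_contraction_gap (eps / 3) ltac:(lra)) as [h [Hh Hgap]].
  destruct (step_dist_vanishes x0 (h / 4) ltac:(lra)) as [N HN].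
  assert (Hball : forall p, d (x N) (x (N + p)%nat) < eps / 3 + h / 2).
  { induction p as [| p IH].
    - rewrite Nat.add_0_r. unfold x. rewrite d_refl. lra.
    - replace (N + S p)%nat with (S (N + p)) by lia.
      pose proof (HN N ltac:(lia)) as HaN. pose proof (HN (N + p)%nat ltac:(lia)) as HaNp.
      unfold step_dist in HaN, HaNp. fold (x N) (x (S N)) (x (N + p)%nat) (x (S (N + p))) in *.
      assert (Hnext : d (x (S N)) (x (S (N + p))) < eps / 3).
      { apply Rnot_le_lt. intros Hge.
        apply (Hgap (d (x (S N)) (x (S (N + p)))) (mprime d f T (Nat.iter N f x0) (Nat.iter (N + p) f x0)));
          [apply d_nonneg | apply mprime_nonneg, Hd | apply Hcontr | lra |].
        pose proof (d_tri (x N) (x (N + p)%nat) (x (S (N + p)))).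
        pose proof (d_tri (x (N + p)%nat) (x N) (x (S N))).
        rewrite (d_sym (x (N + p)%nat) (x N)) in *.
        apply mprime_lt; fold (x N) (x (N + p)%nat);
          change (T (f (Nat.iter N f x0))) with (x (S N));
          change (T (f (Nat.iter (N + p) f x0))) with (x (S (N + p))); lra. }
      pose proof (d_tri (x N) (x (S N)) (x (S (N + p)))). lra. }
  exists N. intros m n Hm Hn. change (d (x m) (x n) < eps).
  pose proof (Hball (m - N)%nat) as Hm'. pose proof (Hball (n - N)%nat) as Hn'.
  replace (N + (m - N))%nat with m in Hm' by lia.
  replace (N + (n - N))%nat with n in Hn' by lia.
  pose proof (d_tri (x m) (x N) (x n)). rewrite d_sym in Hm'. lra.
Qed.

Lemma orbit_limit_fixed x0 b :
  converges_to d (fun n => T (Nat.iter n f x0)) (T b) -> f b = b.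
Proof.
  intros Hconv. apply HT_inj, d_eq0. set (c := d (T (f b)) (T b)).
  apply Rle_antisym; [apply Rnot_lt_le; intros Hc | apply d_nonneg].
  destruct (F_contraction_gap c Hc) as [h [Hh Hgap]].
  destruct (Hconv (h / 2) ltac:(lra)) as [N1 HN1].
  destruct (step_dist_vanishes x0 (h / 2) ltac:(lra)) as [N2 HN2].
  set (xn := Nat.iter (N1 + N2) f x0).
  assert (Hxn : d (T xn) (T b) < h / 2) by (apply HN1; lia).
  assert (Hfxn : d (T (f xn)) (T b) < h / 2) by (apply (HN1 (S (N1 + N2))); lia).
  assert (Hstep : d (T xn) (T (f xn)) < h / 2) by (apply HN2; lia).
  apply (Hgap (d (T (f b)) (T (f xn))) (mprime d f T b xn));
    [apply d_nonneg | apply mprime_nonneg, Hd | apply Hcontr | |].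
  - assert (c <= d (T (f b)) (T (f xn)) + d (T (f xn)) (T b)) by apply d_tri. lra.
  - assert (d (T xn) (T (f b)) <= d (T xn) (T b) + c) by (unfold c; rewrite d_sym with (x := T (f b)); apply d_tri).
    apply mprime_lt; rewrite ?(d_sym (T b)); fold c; lra.
Qed.

Lemma fixed_point_unique b c : f b = b -> f c = c -> c = b.
Proof.
  intros Hb Hc. apply HT_inj, d_eq0.
  pose proof (Hcontr c b) as Hcb. rewrite Hb, Hc in Hcb.
  apply (F_contraction_zero _ (mprime d f T c b)); [split | exact Hcb].
  - apply mprime_nonneg, Hd.
  - apply mprime_le; rewrite ?Hb, ?Hc, ?d_refl, ?(d_sym (T b) (T c)); try apply d_nonneg; lra.
Qed.

Lemma unique_fixed_point_attracting :
  inhabited X -> complete d -> continuous_map d T -> subsequentially_convergent d T ->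
  exists b : X,
    (f b = b /\ forall c : X, f c = c -> c = b) /\
    (sequentially_convergent d T ->
       forall x : X, converges_to d (fun n => Nat.iter n f x) b).
Proof.
  intros [x0] Hcomp HT_cont HT_subseq.
  destruct (Hcomp _ (orbit_cauchy x0)) as [z Hz].
  destruct (HT_subseq _ (ex_intro _ z Hz)) as [sigma [Hsigma [b Hb]]].
  assert (Hzb : z = T b).
  { apply (converges_to_unique X d Hd (fun n => T (Nat.iter (sigma n) f x0))).
    - exact (converges_to_subseq X d _ _ sigma Hsigma Hz).
    - exact (converges_to_continuous X d Hd T _ _ HT_cont Hb). }
  subst z.
  pose proof (orbit_limit_fixed x0 b Hz) as Hfix.
  exists b. split; [split; [exact Hfix | intros c Hc; exact (fixed_point_unique b c Hfix Hc)] |].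
  intros HT_seq x.
  destruct (Hcomp _ (orbit_cauchy x)) as [z Hz'].
  destruct (HT_seq _ (ex_intro _ z Hz')) as [b' Hb'].
  pose proof (orbit_limit_fixed x b' (converges_to_continuous X d Hd T _ _ HT_cont Hb')) as Hfix'.
  rewrite <- (fixed_point_unique b b' Hfix Hfix'). exact Hb'.
Qed.

End ContractiveCondition.

Theorem theorem2p1
  (X : Type) (HX : inhabited X) (d : X -> X -> R) (Hd : is_metric d) (Hcomp : complete d)
  (k : R) (Hk : 0 <= k < 1)
  (S T : X -> X)
  (HTc : continuous_map d T) (HTi : one_to_one T)
  (HTs : subsequentially_convergent d T)
  (phi : R -> R)
  (Hphi_nonneg : forall t, 0 <= t -> 0 <= phi t)
  (Hphi_loc : forall a, 0 <= a -> integrable_on phi 0 a)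
  (Hphi_pos : forall eps, eps > 0 -> integral phi 0 eps > 0)
  (Hcontr : forall x y : X,
     integral phi 0 (d (T (S x)) (T (S y))) <= k * integral phi 0 (mprime d S T x y)) :
  exists b : X,
    (S b = b /\ forall c : X, S c = c -> c = b) /\
    (sequentially_convergent d T ->
       forall x : X, converges_to d (fun n => Nat.iter n S x) b).
Proof.
  apply (unique_fixed_point_attracting (integral phi 0)) with (k := k) (d := d) (T := T);
    try assumption.
  - intros p q Hpq. apply integral_mono; assumption.
  - intros p Hp. apply integral_nonneg; assumption.
  - intros c eps Hc Heps. apply integral_continuous; assumption.
Qed.
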